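(* Let $\mathbb{K}$ be a field and $f=a_0(x)+a_1(x)y+\cdots+a_n(x)y^n\in\mathbb{K}[x,y]$ with $n\geq 2$, $a_0,\ldots,a_n\in\mathbb{K}[x]$, $a_0a_n\neq 0$. Assume that $f$ has no nonconstant factor in $\mathbb{K}[x]$, and let $\nu_0$ and $\nu_n$ be the number of irreducible factors of $a_0(x)$ and $a_n(x)$ in $\mathbb{K}[x]$, respectively, counted with their multiplicities. Then $f$ is a product of at most $\nu=\min\{\nu_0,\nu_n\}$ irreducible polynomials over $\mathbb{K}[x]$ in each of the following two cases: (i) $a_0$ is reducible over $\mathbb{K}$, $\deg a_n\geq\deg a_0-\deg q$ where $q\in\mathbb{K}[x]$ is an irreducible factor of $a_0$ of smallest degree, and $\deg a_0>\max\{\deg a_1,\dots,\deg a_n\}$; (ii) $a_n$ is reducible over $\mathbb{K}$, $\deg a_0\geq\deg a_n-\deg q$ where $q\in\mathbb{K}[x]$ is an irreducible factor of $a_n$ of smallest degree, and $\deg a_n>\max\{\deg a_0,\dots,\deg a_{n-1}\}$.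
   Context: $f$ is regarded as a polynomial in $y$ with coefficients in $\mathbb{K}[x]$; ''a product of at most $k$ irreducible polynomials over $\mathbb{K}[x]$'' means that in the factorization of $f$ into irreducible elements of $\mathbb{K}[x][y]$ the number of factors, counted with multiplicities, is at most $k$. *)

From HB Require Import structures.
From mathcomp Require Import all_boot all_order all_algebra.
Set Implicit Arguments. Unset Strict Implicit. Unset Printing Implicit Defensive.
Import GRing.Theory.
Local Open Scope ring_scope.

Definition irred_elt (R : idomainType) (p : R) : Prop :=
  [/\ p != 0, p \isn't a GRing.unit &
      forall a b : R, p = a * b -> a \is a GRing.unit \/ b \is a GRing.unit].

Definition nfactors (K : fieldType) (p : {poly K}) (k : nat) : Prop :=
  exists s : seq {poly K},
    [/\ size s = k, (forall q, q \in s -> irreducible_poly q) &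
        p %= \prod_(q <- s) q].

Definition prod_at_most_irred (K : fieldType) (f : {poly {poly K}}) (k : nat) : Prop :=
  exists s : seq {poly {poly K}},
    [/\ (size s <= k)%N, (forall g, g \in s -> irred_elt g) &
        f = \prod_(g <- s) g].

Definition reducible_poly (K : fieldType) (p : {poly K}) : Prop :=
  (1 < size p)%N /\ ~ irreducible_poly p.

From mathcomp Require Import all_boot all_order all_algebra.
From mathcomp Require Import zify.
From Stdlib Require Import Classical.

(* Factor f into irreducible elements g_1, ..., g_k of K[x][y]. Then a_0 is the
   product of the y^0-coefficients g_i(0) and a_n that of the leading
   coefficients lc(g_i), so it suffices that all of these are nonconstant:
   each a_0 and a_n then has at least k irreducible factors.
   In case (i), a_0 has strictly the largest degree among the a_i. This
   dominance is inherited by both g and its cofactor h in f = g h, because it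
   says that the top x-degree part of f is a monomial in y. Since f has no
   nonconstant factor in K[x], g involves y, so deg g(0) > deg lc(g) and g(0) is
   nonconstant. If lc(g) were constant and h involved y, then
   deg a_0 = deg g(0) + deg h(0) > deg q + deg lc(h) = deg q + deg a_n, against
   the hypothesis; if h is a constant instead, a_n itself would be constant,
   whereas reducibility of a_0 gives deg a_n >= deg a_0 - deg q >= deg q.
   Case (ii) is symmetric. *)

Set Implicit Arguments.
Unset Strict Implicit.
Unset Printing Implicit Defensive.
Import GRing.Theory.
Local Open Scope ring_scope.

Section IrreducibleFactors.
Variable K : fieldType.
Implicit Types p q r d : {poly K}.

Lemma not_irredp_proper_dvdp p : (1 < size p)%N -> ~ irreducible_poly p ->
  exists2 d : {poly K}, d %| p & (1 < size d < size p)%N.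
Proof.
move=> p_gt1 p_red.
have [d [d_neq1 dp d_neq_p]] : exists d, [/\ size d != 1%N, d %| p & ~~ (d %= p)].
  apply: NNPP => no_d; apply: p_red; split=> // d d_neq1 dp.
  by case: (boolP (d %= p)) => // ?; case: no_d; exists d.
exists d => //.
have p_neq0 : p != 0 by rewrite -size_poly_gt0 ltnW.
have d_neq0 : d != 0 by apply: contraNneq p_neq0 => d0; rewrite -dvd0p -d0.
have le_d_p : (size d <= size p)%N := dvdp_leq p_neq0 dp.
have neq_d_p : size d != size p by rewrite dvdp_size_eqp.
have d_gt0 : (0 < size d)%N by rewrite size_poly_gt0.
lia.
Qed.

Lemma exists_irredp_dvdp p : (1 < size p)%N -> exists2 r, irreducible_poly r & r %| p.
Proof.
have [n] := ubnP (size p); elim: n p => // n IH p lt_p_n p_gt1.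
have [p_irr | p_red] := classic (irreducible_poly p); first by exists p.
have [d dp /andP[d_gt1 lt_d_p]] := not_irredp_proper_dvdp p_gt1 p_red.
have [|r r_irr rd] := IH d _ d_gt1; first exact: leq_trans lt_d_p _.
by exists r => //; apply: dvdp_trans dp.
Qed.

Lemma irredp_dvdp_prod r (s : seq {poly K}) : irreducible_poly r ->
  (forall q, q \in s -> irreducible_poly q) -> r %| \prod_(q <- s) q ->
  exists2 q, q \in s & r %= q.
Proof.
move=> r_irr; elim: s => [|q s IH] s_irr.
  by rewrite big_nil dvdp1 => /eqP r1; have := r_irr.1; rewrite r1.
rewrite big_cons; have [rq _|] := boolP (r %| q).
  exists q; first exact: mem_head.
  by apply: (s_irr q (mem_head _ _)) rq; rewrite neq_ltn r_irr.1 orbT.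
rewrite -(irreducible_poly_coprime _ r_irr) => /Gauss_dvdpr -> /IH[].
- by move=> x xs; apply: s_irr; rewrite inE xs orbT.
- by move=> x xs rx; exists x; rewrite // inE xs orbT.
Qed.

Lemma leq_size_dvdp_prod_irred (t s : seq {poly K}) :
  (forall x, x \in t -> 1 < size x)%N ->
  (forall q, q \in s -> irreducible_poly q) ->
  \prod_(x <- t) x %| \prod_(q <- s) q -> (size t <= size s)%N.
Proof.
elim: t s => [//|b t IH] s t_gt1 s_irr.
have [r r_irr rb] := exists_irredp_dvdp (t_gt1 b (mem_head _ _)).
rewrite big_cons => bt_s.
have r_s : r %| \prod_(q <- s) q by rewrite (dvdp_trans rb) // (dvdp_trans _ bt_s) ?dvdp_mulIl.
have [q qs rq] := irredp_dvdp_prod r_irr s_irr r_s.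
rewrite (big_rem _ qs) /= in bt_s.
have t_rem : \prod_(x <- t) x %| \prod_(y <- rem q s) y.
  rewrite -(dvdp_mul2r _ _ (irredp_neq0 r_irr)).
  apply: dvdp_trans (_ : _ %| b * \prod_(x <- t) x) _.
    by rewrite mulrC dvdp_mul.
  have rem_r : \prod_(y <- rem q s) y * r %= q * \prod_(y <- rem q s) y.
    by rewrite mulrC eqp_mulr.
  by rewrite (eqp_dvdr _ rem_r).
have : (size t <= size (rem q s))%N.
  apply: IH t_rem => [x xt|x /mem_rem]; last exact: s_irr.
  by apply: t_gt1; rewrite inE xt orbT.
rewrite size_rem //; have : (0 < size s)%N by case: (s) qs.
rewrite /=; lia.
Qed.

Lemma leq_nfactors (t : seq {poly K}) p k : (forall x, x \in t -> 1 < size x)%N ->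
  p %= \prod_(x <- t) x -> nfactors p k -> (size t <= k)%N.
Proof.
move=> t_gt1 pt [s [<- s_irr ps]]; apply: leq_size_dvdp_prod_irred => //.
by rewrite -(eqp_dvdl _ pt) -(eqp_dvdr _ ps) dvdpp.
Qed.

Lemma reducible_deg_geq_double p q : reducible_poly p ->
  (forall r, irreducible_poly r -> r %| p -> (size q <= size r)%N) ->
  (2 * (size q).-1 <= (size p).-1)%N.
Proof.
move=> [p_gt1 p_red] q_min.
have [d dp /andP[d_gt1 lt_d_p]] := not_irredp_proper_dvdp p_gt1 p_red.
have p_neq0 : p != 0 by rewrite -size_poly_gt0 ltnW.
have ed : p %/ d %| p := divp_dvd dp.
move: (divpK dp) ed; set e := p %/ d => pE ed.
have e_neq0 : e != 0 by apply: contraNneq p_neq0 => e0; rewrite -pE e0 mul0r.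
have d_neq0 : d != 0 by rewrite -size_poly_gt0 ltnW.
have size_p : size p = (size e + size d).-1 by rewrite -pE size_mul.
have e_gt0 : (0 < size e)%N by rewrite size_poly_gt0.
have e_gt1 : (1 < size e)%N by lia.
have [r1 r1_irr r1d] := exists_irredp_dvdp d_gt1.
have [r2 r2_irr r2e] := exists_irredp_dvdp e_gt1.
have le_r1_d : (size r1 <= size d)%N := dvdp_leq d_neq0 r1d.
have le_r2_e : (size r2 <= size e)%N := dvdp_leq e_neq0 r2e.
have le_q_r1 : (size q <= size r1)%N := q_min r1 r1_irr (dvdp_trans r1d dp).
have le_q_r2 : (size q <= size r2)%N := q_min r2 r2_irr (dvdp_trans r2e ed).
lia.
Qed.

(* [ag * ah] and [bg * bh] are the two extreme y-coefficients of a product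
   g * h in K[x][y], [a] being the one of largest x-degree. *)
Lemma end_coefs_nonconst (q ag ah bg bh : {poly K}) : (1 < size q)%N ->
  (forall r, irreducible_poly r -> r %| ag * ah -> (size q <= size r)%N) ->
  (2 * (size q).-1 <= (size (ag * ah)%R).-1)%N ->
  ((size (ag * ah)%R).-1 <= (size (bg * bh)%R).-1 + (size q).-1)%N ->
  (size bg < size ag)%N -> (size bh < size ah)%N \/ bh = ah /\ (size ah <= 1)%N ->
  (1 < size ag)%N /\ (1 < size bg)%N.
Proof.
move=> q_gt1 q_min a_large b_large lt_bg_ag bh_ah.
have b_gt1 : (1 < size (bg * bh)%R)%N by lia.
have /andP[bg_neq0 bh_neq0] : (bg != 0) && (bh != 0).
  by rewrite -negb_or -mulf_eq0 -size_poly_gt0 ltnW.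
have a_neq0 : ag * ah != 0 by rewrite -size_poly_gt0; lia.
have /andP[ag_neq0 ah_neq0] : (ag != 0) && (ah != 0) by rewrite -negb_or -mulf_eq0.
have size_b : size (bg * bh) = (size bg + size bh).-1 := size_mul bg_neq0 bh_neq0.
have size_a : size (ag * ah) = (size ag + size ah).-1 := size_mul ag_neq0 ah_neq0.
have bg_gt0 : (0 < size bg)%N by rewrite size_poly_gt0.
have ag_gt1 : (1 < size ag)%N by lia.
split=> //; rewrite ltnNge; apply/negP => bg_le1.
case: bh_ah => [lt_bh_ah | [bhE ah_le1]]; last by move: b_gt1; rewrite size_b bhE; lia.
have [r r_irr r_ag] := exists_irredp_dvdp ag_gt1.
have le_q_r : (size q <= size r)%N := q_min r r_irr (dvdp_mulr _ r_ag).
have le_r_ag : (size r <= size ag)%N := dvdp_leq ag_neq0 r_ag.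
lia.
Qed.
End IrreducibleFactors.

Section DominantCoefficient.
Variable R : idomainType.
Implicit Types (a b : {poly R}) (u g h : {poly {poly R}}).

Definition monomial_at a (m : nat) := forall j, j != m -> a`_j = 0.

Lemma monomial_at_mulXn a k : (size a <= 1)%N -> monomial_at (a * 'X^k) k.
Proof.
move=> a_le1 j jk; rewrite coefMXn; case: ltnP => // le_k_j.
by apply: nth_default; apply: leq_trans a_le1 _; lia.
Qed.

Lemma monomial_atM a b m : a != 0 -> b != 0 -> monomial_at (a * b) m ->
  exists ma mb, [/\ (ma + mb = m)%N, monomial_at a ma & monomial_at b mb].
Proof.
move=> a_neq0 b_neq0 ab_m.
have [ma [qa /implyP/(_ a_neq0) qa_0 aE]] := multiplicity_XsubC a 0.
have [mb [qb /implyP/(_ b_neq0) qb_0 bE]] := multiplicity_XsubC b 0.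
rewrite polyC0 subr0 in aE bE.
have abE : a * b = qa * qb * 'X^(ma + mb) by rewrite aE bE exprD mulrACA.
have qab_0 : (qa * qb)`_0 != 0 by rewrite coef0M -!horner_coef0 mulf_neq0.
have mE : (ma + mb = m)%N.
  apply/eqP; apply: contraNT qab_0 => /ab_m.
  by rewrite abE coefMXn ltnn subnn => ->.
have qa_neq0 : qa != 0 by apply: contraNneq qa_0 => ->; rewrite /root horner0.
have qb_neq0 : qb != 0 by apply: contraNneq qb_0 => ->; rewrite /root horner0.
have qab_le1 : (size (qa * qb)%R <= 1)%N.
  apply/leq_sizeP => j j_gt0; have := ab_m (j + m)%N.
  rewrite abE coefMXn mE addnK ltnNge leq_addl /=; apply; lia.
have qa_gt0 : (0 < size (qa : {poly R}))%N by rewrite size_poly_gt0.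
have qb_gt0 : (0 < size (qb : {poly R}))%N by rewrite size_poly_gt0.
rewrite size_mul // in qab_le1.
by exists ma, mb; split; rewrite // ?aE ?bE; apply: monomial_at_mulXn; lia.
Qed.

Definition dominant_coef (u : {poly {poly R}}) (m : nat) :=
  forall j, j != m -> (size (u`_j)%R < size (u`_m)%R)%N.

Lemma dominant_coef_ltn u m : dominant_coef u m -> (m < size u)%N.
Proof.
move=> dom; rewrite ltnNge; apply/negP => le_u_m.
have := dom m.+1 (negbT (gtn_eqF (ltnSn m))).
by rewrite (nth_default _ le_u_m) size_poly0.
Qed.

Lemma dominant_coefP u m : u`_m != 0 ->
  (forall j, j != m -> (j < size u)%N -> (size (u`_j)%R < size (u`_m)%R)%N) ->
  dominant_coef u m.
Proof.
move=> um_neq0 dom j jm; have [/(dom j jm)//|le_u_j] := ltnP j (size u).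
by rewrite nth_default // size_poly0 size_poly_gt0.
Qed.

Lemma coef_lead_swapXY u j : (lead_coef (swapXY u))`_j = u`_j`_(sizeY u).-1.
Proof. by rewrite lead_coefE coef_swapXY sizeYE. Qed.

(* lead_coef (swapXY u) collects the coefficients of top x-degree of the u`_j. *)
Lemma dominant_coefE u m : u != 0 ->
  dominant_coef u m <-> monomial_at (lead_coef (swapXY u)) m.
Proof.
move=> u_neq0; split=> [dom j jm | mono j jm].
  have lt_j_m : (size (u`_j)%R < size (u`_m)%R)%N := dom j jm.
  have le_m : (size (u`_m)%R <= sizeY u)%N := max_size_coefXY u m.
  have le_j : (size (u`_j)%R <= (sizeY u).-1)%N by lia.
  by rewrite coef_lead_swapXY nth_default.
have top_m : u`_m`_(sizeY u).-1 != 0.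
  rewrite -coef_lead_swapXY; apply: contra u_neq0 => /eqP top0.
  rewrite -swapXY_eq0 -lead_coef_eq0; apply/eqP/polyP => i; rewrite coef0.
  by have [->|] := eqVneq i m; [exact: top0 | exact: mono].
have lt_top_m : ((sizeY u).-1 < size (u`_m)%R)%N.
  by rewrite ltnNge; apply: contra top_m => ?; apply/eqP/nth_default.
have top_j : u`_j`_(sizeY u).-1 = 0 by rewrite -coef_lead_swapXY mono.
have le_j : (size (u`_j)%R <= sizeY u)%N := max_size_coefXY u j.
suff : (size (u`_j)%R <= (sizeY u).-1)%N by lia.
rewrite leqNgt; apply/negP => gt_j.
have size_j : size (u`_j)%R = sizeY u by lia.
have : lead_coef u`_j == 0 by rewrite lead_coefE size_j top_j.
by rewrite lead_coef_eq0 => /eqP uj0; move: gt_j; rewrite uj0 size_poly0.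
Qed.

Lemma dominant_coefM g h m : g != 0 -> h != 0 -> dominant_coef (g * h) m ->
  exists mg mh, [/\ (mg + mh = m)%N, dominant_coef g mg & dominant_coef h mh].
Proof.
move=> g_neq0 h_neq0 /(dominant_coefE _ (mulf_neq0 g_neq0 h_neq0)).
rewrite rmorphM lead_coefM => /monomial_atM[||mg [mh [mE mono_g mono_h]]].
- by rewrite lead_coef_eq0 swapXY_eq0.
- by rewrite lead_coef_eq0 swapXY_eq0.
by exists mg, mh; split; rewrite // dominant_coefE.
Qed.

Lemma dominant_coef0M g h : g != 0 -> h != 0 -> dominant_coef (g * h) 0 ->
  dominant_coef g 0 /\ dominant_coef h 0.
Proof.
move=> g_neq0 h_neq0 /(dominant_coefM g_neq0 h_neq0)[mg [mh [/eqP]]].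
by rewrite addn_eq0 => /andP[/eqP-> /eqP->].
Qed.

Lemma dominant_lead_coefM g h : g != 0 -> h != 0 ->
  dominant_coef (g * h) (size (g * h)%R).-1 ->
  dominant_coef g (size g).-1 /\ dominant_coef h (size h).-1.
Proof.
move=> g_neq0 h_neq0 /(dominant_coefM g_neq0 h_neq0)[mg [mh [mE dom_g dom_h]]].
have lt_g : (mg < size g)%N := dominant_coef_ltn dom_g.
have lt_h : (mh < size h)%N := dominant_coef_ltn dom_h.
have size_gh : size (g * h)%R = (size g + size h).-1 := size_mul g_neq0 h_neq0.
have mgE : mg = (size g).-1 by lia.
have mhE : mh = (size h).-1 by lia.
by rewrite -mgE -mhE.
Qed.
End DominantCoefficient.

Section Bivariate.
Variable K : fieldType.
Implicit Types (f g h u : {poly {poly K}}) (q : {poly K}).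

Lemma polyXY_unitE u :
  (u \is a GRing.unit) = (size u == 1%N) && (size (u`_0)%R == 1%N).
Proof.
rewrite poly_unitE [_`_0 \is a _]poly_unitE unitfE; congr (_ && _).
by apply/andb_idr => /size_poly1P[c c_neq0 ->]; rewrite coefC.
Qed.

Lemma nonunit_size_sizeY u : u != 0 -> u \isn't a GRing.unit ->
  (2 < size u + sizeY u)%N.
Proof.
move=> u_neq0; rewrite ltnNge; apply: contraNN => small.
have u_gt0 : (0 < size u)%N by rewrite size_poly_gt0.
have uY_gt0 : (0 < sizeY u)%N by rewrite lt0n sizeY_eq0.
have size_u : size u = 1%N by lia.
have u0_neq0 : u`_0 != 0.
  by have := u_neq0; rewrite -lead_coef_eq0 lead_coefE size_u.
have u0_le1 : (size (u`_0)%R <= 1)%N.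
  by apply: leq_trans (max_size_coefXY u 0) _; lia.
have u0_gt0 : (0 < size (u`_0)%R)%N by rewrite size_poly_gt0.
have size_u0 : size (u`_0)%R = 1%N by lia.
by rewrite polyXY_unitE size_u size_u0.
Qed.

Lemma irred_factorization_exists u : u != 0 -> u \isn't a GRing.unit ->
  exists2 s : seq {poly {poly K}},
    (forall g, g \in s -> irred_elt g) & u = \prod_(g <- s) g.
Proof.
have [n] := ubnP (size u + sizeY u)%N; elim: n u => // n IH u lt_u_n u_neq0 u_nonunit.
have [u_irr|u_red] := classic (irred_elt u).
  by exists [:: u]; [move=> g; rewrite inE => /eqP-> | rewrite big_seq1].
have [a [b [uE a_nonunit b_nonunit]]] : exists a b,
    [/\ u = a * b, a \isn't a GRing.unit & b \isn't a GRing.unit].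
  apply: NNPP => no_ab; apply: u_red; split=> // a b uE.
  have [|a_nonunit] := boolP (a \is a GRing.unit); first by left.
  by have [|b_nonunit] := boolP (b \is a GRing.unit); [right | case: no_ab; exists a, b].
have a_neq0 : a != 0 by apply: contraNneq u_neq0 => a0; rewrite uE a0 mul0r.
have b_neq0 : b != 0 by apply: contraNneq u_neq0 => b0; rewrite uE b0 mulr0.
have size_u : size u = (size a + size b).-1 by rewrite uE size_mul.
have sizeY_u : sizeY u = (sizeY a + sizeY b).-1.
  by rewrite uE !sizeYE rmorphM size_mul ?swapXY_eq0.
have a_large := nonunit_size_sizeY a_neq0 a_nonunit.
have b_large := nonunit_size_sizeY b_neq0 b_nonunit.
have a_gt0 : (0 < size a)%N by rewrite size_poly_gt0.
have b_gt0 : (0 < size b)%N by rewrite size_poly_gt0.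
have aY_gt0 : (0 < sizeY a)%N by rewrite lt0n sizeY_eq0.
have bY_gt0 : (0 < sizeY b)%N by rewrite lt0n sizeY_eq0.
have [|sa sa_irr aE] := IH a _ a_neq0 a_nonunit; first lia.
have [|sb sb_irr bE] := IH b _ b_neq0 b_nonunit; first lia.
exists (sa ++ sb); last by rewrite uE aE bE big_cat.
by move=> g; rewrite mem_cat => /orP[]; [apply: sa_irr | apply: sb_irr].
Qed.

Definition primitive_poly f :=
  forall d : {poly K}, (exists g, f = d%:P * g) -> (size d <= 1)%N.

Lemma primitive_factor_const f g h : primitive_poly f -> f = g * h ->
  (size h <= 1)%N -> lead_coef h = h`_0 /\ (size (h`_0)%R <= 1)%N.
Proof.
move=> f_prim fE h_le1; have hE := size1_polyC h_le1.
split; first by rewrite {1}hE lead_coefC.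
by apply: f_prim; exists g; rewrite fE mulrC {1}hE.
Qed.

Lemma primitive_factor_size f g h : primitive_poly f -> f = g * h ->
  g != 0 -> g \isn't a GRing.unit -> (1 < size g)%N.
Proof.
move=> f_prim fE g_neq0; rewrite ltnNge; apply: contraNN => g_le1.
have [_ g0_le1] := primitive_factor_const f_prim (etrans fE (mulrC g h)) g_le1.
have g0_neq0 : g`_0 != 0 by move: g_neq0; rewrite {1}(size1_polyC g_le1) polyC_eq0.
have g_gt0 : (0 < size g)%N by rewrite size_poly_gt0.
have g0_gt0 : (0 < size (g`_0)%R)%N by rewrite size_poly_gt0.
have size_g : size g = 1%N by lia.
have size_g0 : size (g`_0)%R = 1%N by lia.
by rewrite polyXY_unitE size_g size_g0.
Qed.

Lemma dominant_coef0_factor_nonconst f g h q : primitive_poly f -> f = g * h ->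
  f != 0 -> g \isn't a GRing.unit -> dominant_coef f 0 -> (1 < size q)%N ->
  (forall r, irreducible_poly r -> r %| f`_0 -> (size q <= size r)%N) ->
  (2 * (size q).-1 <= (size (f`_0)%R).-1)%N ->
  ((size (f`_0)%R).-1 <= (size (lead_coef f)).-1 + (size q).-1)%N ->
  (1 < size (g`_0)%R)%N /\ (1 < size (lead_coef g))%N.
Proof.
move=> f_prim fE f_neq0 g_nonunit dom q_gt1 q_min q_small a0_bound.
have g_neq0 : g != 0 by apply: contraNneq f_neq0 => g0; rewrite fE g0 mul0r.
have h_neq0 : h != 0 by apply: contraNneq f_neq0 => h0; rewrite fE h0 mulr0.
have g_gt1 := primitive_factor_size f_prim fE g_neq0 g_nonunit.
rewrite fE in dom; have [dom_g dom_h] := dominant_coef0M g_neq0 h_neq0 dom.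
rewrite fE coef0M lead_coefM in q_min q_small a0_bound.
apply: end_coefs_nonconst q_gt1 q_min q_small a0_bound _ _.
  by rewrite lead_coefE; apply: dom_g; rewrite -lt0n -subn1 subn_gt0.
have [h_le1|h_gt1] := leqP (size h) 1.
  by right; apply: primitive_factor_const f_prim fE h_le1.
by left; rewrite lead_coefE; apply: dom_h; rewrite -lt0n -subn1 subn_gt0.
Qed.

Lemma dominant_lead_coef_factor_nonconst f g h q : primitive_poly f -> f = g * h ->
  f`_0 != 0 -> g \isn't a GRing.unit -> dominant_coef f (size f).-1 ->
  (1 < size q)%N ->
  (forall r, irreducible_poly r -> r %| lead_coef f -> (size q <= size r)%N) ->
  (2 * (size q).-1 <= (size (lead_coef f)).-1)%N ->
  ((size (lead_coef f)).-1 <= (size (f`_0)%R).-1 + (size q).-1)%N ->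
  (1 < size (g`_0)%R)%N /\ (1 < size (lead_coef g))%N.
Proof.
move=> f_prim fE f0_neq0 g_nonunit dom q_gt1 q_min q_small an_bound.
have g_neq0 : g != 0 by apply: contraNneq f0_neq0 => g0; rewrite fE g0 mul0r coef0.
have h_neq0 : h != 0 by apply: contraNneq f0_neq0 => h0; rewrite fE h0 mulr0 coef0.
have g_gt1 := primitive_factor_size f_prim fE g_neq0 g_nonunit.
rewrite fE in dom; have [dom_g dom_h] := dominant_lead_coefM g_neq0 h_neq0 dom.
rewrite fE coef0M lead_coefM in q_min q_small an_bound.
have [] := end_coefs_nonconst q_gt1 q_min q_small an_bound _ _; last by [].
  by rewrite lead_coefE; apply: dom_g; rewrite eq_sym -lt0n -subn1 subn_gt0.
have [h_le1|h_gt1] := leqP (size h) 1.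
  by right; have [-> ->] := primitive_factor_const f_prim fE h_le1.
by left; rewrite lead_coefE; apply: dom_h; rewrite eq_sym -lt0n -subn1 subn_gt0.
Qed.

Lemma size_factorization_leq_nfactors (s : seq {poly {poly K}}) f k0 kn :
  f = \prod_(g <- s) g ->
  (forall g, g \in s -> (1 < size (g`_0)%R)%N /\ (1 < size (lead_coef g))%N) ->
  nfactors f`_0 k0 -> nfactors (lead_coef f) kn -> (size s <= minn k0 kn)%N.
Proof.
move=> fE ends nf0 nfn; rewrite leq_min; apply/andP; split.
  rewrite -(size_map (fun g => g`_0)); apply: leq_nfactors nf0.
    by move=> x /mapP[g gs ->]; have [] := ends g gs.
  by rewrite big_map -coef0_prod -fE eqpxx.
rewrite -(size_map (@lead_coef _)); apply: leq_nfactors nfn.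
  by move=> x /mapP[g gs ->]; have [] := ends g gs.
by rewrite big_map -lead_coef_prod -fE eqpxx.
Qed.
End Bivariate.

Theorem theorem2 (K : fieldType) (f : {poly {poly K}}) (nu0 nun : nat) :
  let n := (size f).-1 in
  let a : nat -> {poly K} := fun i => f`_i in
  (2 <= n)%N ->
  (a 0%N) * (a n) != 0 ->
  (forall d : {poly K}, (exists g, f = d%:P * g) -> (size d <= 1)%N) ->
  nfactors (a 0%N) nu0 ->
  nfactors (a n) nun ->
  ( (* case (i) *)
    (reducible_poly (a 0%N) /\
     (exists q : {poly K},
        [/\ irreducible_poly q, q %| (a 0%N),
            (forall r : {poly K}, irreducible_poly r -> r %| (a 0%N) ->
                 (size q <= size r)%N) &
            ((size (a 0%N)).-1 <= (size (a n)).-1 + (size q).-1)%N]) /\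
     (forall i, (1 <= i <= n)%N -> (size (a i) < size (a 0%N))%N))
  \/ (* case (ii) *)
    (reducible_poly (a n) /\
     (exists q : {poly K},
        [/\ irreducible_poly q, q %| (a n),
            (forall r : {poly K}, irreducible_poly r -> r %| (a n) ->
                 (size q <= size r)%N) &
            ((size (a n)).-1 <= (size (a 0%N)).-1 + (size q).-1)%N]) /\
     (forall i, (i < n)%N -> (size (a i) < size (a n))%N)) ) ->
  prod_at_most_irred f (minn nu0 nun).
Proof.
move=> n a n_ge2 a0an_neq0 f_prim nf0 nfn hcase.
have /andP[a0_neq0 an_neq0] : (a 0%N != 0) && (a n != 0).
  by rewrite -negb_or -mulf_eq0.
have size_f : size f = n.+1 by move: n_ge2; rewrite /n; case: (size f).
have f_neq0 : f != 0 by rewrite -size_poly_gt0 size_f.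
have f_nonunit : f \isn't a GRing.unit.
  by rewrite polyXY_unitE size_f gtn_eqF // leqW.
have [s s_irr fE] := irred_factorization_exists f_neq0 f_nonunit.
exists s; split=> //; apply: (size_factorization_leq_nfactors fE _ nf0 nfn) => g gs.
have fgE : f = g * \prod_(x <- rem g s) x by rewrite fE (big_rem _ gs).
have [_ g_nonunit _] := s_irr g gs.
case: hcase => [[a0_red [[q [q_irr _ q_min a0_bound]] dom]] |
                [an_red [[q [q_irr _ q_min an_bound]] dom]]].
  apply: dominant_coef0_factor_nonconst f_prim fgE f_neq0 g_nonunit _ q_irr.1 q_min
    (reducible_deg_geq_double a0_red q_min) a0_bound.
  by apply: dominant_coefP => // j j_neq0; rewrite size_f => lt_j; apply: dom; lia.
apply: dominant_lead_coef_factor_nonconst f_prim fgE a0_neq0 g_nonunit _ q_irr.1 q_min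
  (reducible_deg_geq_double an_red q_min) an_bound.
by apply: dominant_coefP => // j j_neq; rewrite size_f => lt_j; apply: dom; lia.
Qed.
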